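(* Let $F$ and $H$ be fixed graphs and let $r\ge |V(F)|$. Then $\widehat{\mathrm{ex}}_r(n,H,\text{Berge-}F)\le O(\mathrm{ex}(n,H,F))+O(n^{|V(H)|-1})$ as $n\to\infty$.
   Context: A hypergraph $\mathcal{H}$ is a Berge copy of a graph $G$ if $V(G)\subseteq V(\mathcal{H})$ and there is a bijection $f:E(G)\to E(\mathcal{H})$ with $e\subseteq f(e)$ for all $e\in E(G)$; $\mathcal{H}$ is Berge-$F$-free if it contains no Berge copy of $F$ as a subhypergraph. The shadow graph of a hypergraph $\mathcal{H}$ is the graph on $V(\mathcal{H})$ in which $uv$ is an edge iff some hyperedge contains both $u$ and $v$. $\widehat{\mathrm{ex}}_r(n,H,\text{Berge-}F)$ is the maximum number of copies of $H$ in the shadow graph of an $r$-uniform Berge-$F$-free $n$-vertex hypergraph. $\mathrm{ex}(n,H,F)$ is the maximum number of copies of $H$ in an $F$-free $n$-vertex graph. *)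

From mathcomp Require Import all_boot.
Set Implicit Arguments. Unset Strict Implicit. Unset Printing Implicit Defensive.

Definition is_graph (T : finType) (E : {set {set T}}) : bool :=
  [forall e in E, #|e| == 2].

Definition is_uniform (T : finType) (r : nat) (E : {set {set T}}) : bool :=
  [forall e in E, #|e| == r].

Definition shadow (T : finType) (E : {set {set T}}) : {set {set T}} :=
  [set e : {set T} | (#|e| == 2) && [exists h in E, e \subset h]].

(* The (unlabelled) copies of H = (VH, EH) in the graph G: subgraphs (V', E')
   of G that are isomorphic to H, i.e. images of H under an injection. *)
Definition copy_set (VH T : finType) (EH : {set {set VH}}) (G : {set {set T}})
  : {set ({set T} * {set {set T}})} :=
  [set p : {set T} * {set {set T}} | [exists f : {ffun VH -> T},
     [&& injectiveb f, p.1 == f @: VH, p.2 == [set (f @: e) | e : {set VH} in EH]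
       & p.2 \subset G]]].

Definition copies (VH T : finType) (EH : {set {set VH}}) (G : {set {set T}}) : nat :=
  #|copy_set EH G|.

Definition contains (VF T : finType) (EF : {set {set VF}}) (G : {set {set T}}) : bool :=
  [exists f : {ffun VF -> T}, injectiveb f && [forall e in EF, (f @: e) \in G]].

Definition berge_contains (VF T : finType) (EF : {set {set VF}}) (E : {set {set T}}) : bool :=
  [exists f : {ffun VF -> T}, exists g : {ffun {set VF} -> {set T}},
    [&& injectiveb f,
        [forall e in EF, (g e \in E) && (f @: e \subset g e)]
      & [forall e1 in EF, forall e2 in EF, (g e1 == g e2) ==> (e1 == e2)]]].

Definition ex_gen (VH VF : finType) (EH : {set {set VH}}) (EF : {set {set VF}}) (n : nat) : nat :=
  \max_(G : {set {set 'I_n}} | is_graph G && ~~ contains EF G) copies EH G.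

Definition ex_hat (VH VF : finType) (r : nat) (EH : {set {set VH}}) (EF : {set {set VF}})
    (n : nat) : nat :=
  \max_(E : {set {set 'I_n}} | is_uniform r E && ~~ berge_contains EF E)
     copies EH (shadow E).

From mathcomp Require Import all_boot zify.
Set Implicit Arguments. Unset Strict Implicit. Unset Printing Implicit Defensive.

(* In a Berge-F-free r-uniform hypergraph with r >= |V(F)|, every hyperedge h contains a pair
   lying in fewer than |E(F)| hyperedges: otherwise embed V(F) into h and pick, greedily, distinct
   hyperedges through the images of the edges of F, which is a Berge copy of F.  Hence there are
   O(n^2) hyperedges, so the copies of H in the shadow with two edges inside one hyperedge number
   O(n^(|V(H)|-1)).  For the other copies, select a subset of every hyperedge and keep the selected
   pairs: this graph is F-free, as a copy of F in it would be a Berge copy, and a fixed such copy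
   of H survives in at least a 2^(-r|E(H)|) fraction of the selections.  Double counting bounds
   their number by 2^(r|E(H)|) ex(n, H, F). *)

Lemma sum_nat_card (I : finType) (A : {pred I}) (P : pred I) :
  \sum_(i in A) (P i : nat) = #|[set i in A | P i]|.
Proof.
rewrite -sum1_card big_mkcond [RHS]big_mkcond; apply: eq_bigr => i _.
by rewrite inE; case: (i \in A); case: (P i).
Qed.

Lemma card_exists_leq_sum (I J : finType) (P : {set I}) (Q : I -> J -> bool) :
  #|[set j | [exists i in P, Q i j]]| <= \sum_(i in P) #|[set j | Q i j]|.
Proof.
have cardE (D : pred J) : #|[set j | D j]| = \sum_(j in predT) (D j : nat).
  by rewrite sum_nat_card; apply: eq_card => j; rewrite !inE.
rewrite cardE; under [X in _ <= X]eq_bigr => i _ do rewrite cardE.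
rewrite exchange_big /=; apply: leq_sum => j _.
by case: existsP => // -[i /andP [Pi Qij]]; rewrite (bigD1 i) //= Qij.
Qed.

Lemma double_counting_leq (I J : finType) (B : {set I}) (S : {set J})
    (R : I -> J -> bool) (m M : nat) :
  0 < #|S| ->
  (forall i, i \in B -> #|S| <= m * #|[set j in S | R i j]|) ->
  (forall j, j \in S -> #|[set i in B | R i j]| <= M) ->
  #|B| <= m * M.
Proof.
move=> S_gt0 dense sparse; rewrite -(leq_pmul2r S_gt0).
have double : \sum_(i in B) #|[set j in S | R i j]| = \sum_(j in S) #|[set i in B | R i j]|.
  under eq_bigr => i _ do rewrite -sum_nat_card.
  by rewrite exchange_big; apply: eq_bigr => j _; rewrite sum_nat_card.
rewrite -sum_nat_const (leq_trans (leq_sum _ dense)) // -big_distrr -mulnA leq_mul2l double.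
by rewrite mulnC -sum_nat_const leq_sum ?orbT.
Qed.

Lemma card_family_set (aT rT : finType) (F : aT -> {set rT}) :
  #|[set f : {ffun aT -> rT} | f \in family F]| = \prod_x #|F x|.
Proof. by rewrite cardsE card_family foldrE big_map big_enum. Qed.

Lemma card_family_leq (aT rT : finType) (F G : aT -> {set rT}) (I : {set aT}) (m : nat) :
  (forall x, x \in I -> #|F x| <= m * #|G x|) -> (forall x, x \notin I -> #|F x| <= #|G x|) ->
  #|[set f : {ffun aT -> rT} | f \in family F]|
    <= m ^ #|I| * #|[set f : {ffun aT -> rT} | f \in family G]|.
Proof.
move=> FG_I FG_nI; rewrite !card_family_set (bigID [in I]) [X in _ * X](bigID [in I]) /=.
rewrite mulnA -prod_nat_const -big_split /=.
by apply: leq_mul; apply: leq_prod => //.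
Qed.

Lemma card_ffun_into (aT rT : finType) (X : {set aT}) (A : {set rT}) :
  #|[set f : {ffun aT -> rT} | [forall x in X, f x \in A]]|
    = #|A| ^ #|X| * #|rT| ^ (#|aT| - #|X|).
Proof.
pose F x := if x \in X then A else [set: rT].
have -> : [set f : {ffun aT -> rT} | [forall x in X, f x \in A]]
          = [set f : {ffun aT -> rT} | f \in family F].
  apply/setP => f; rewrite !inE; apply/forall_inP/familyP => fA x; rewrite /F.
    by case: ifP => [/fA|]; rewrite ?inE.
  by move=> xX; have := fA x; rewrite /F xX.
rewrite card_family_set (bigID [in X]) /=.
rewrite (eq_bigr (fun=> #|A|)) => [|x xX]; last by rewrite /F xX.
rewrite [X in _ * X](eq_bigr (fun=> #|rT|)) => [|x xX]; last by rewrite /F (negbTE xX) cardsT.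
rewrite !prod_nat_const; congr (_ * _ ^ _).
by rewrite -(cardsC X) addKn; apply: eq_card => x; rewrite inE.
Qed.

Lemma exists_subset_card (T : finType) (A : {set T}) (n : nat) :
  n <= #|A| -> exists2 X : {set T}, X \subset A & #|X| = n.
Proof.
case/card_geqP => s [uniq_s <- sA]; exists [set x in s].
  by apply/subsetP => x; rewrite inE => /sA.
by rewrite cardsE; apply/card_uniqP.
Qed.

Lemma exists_injection_into (aT rT : finType) (A : {set rT}) :
  #|aT| <= #|A| -> exists2 f : aT -> rT, injective f & forall x, f x \in A.
Proof.
move=> le_aT_A; exists (fun x => enum_val (widen_ord le_aT_A (enum_rank x))).
  by move=> x y /enum_val_inj [] /ord_inj /enum_rank_inj.
by move=> x; apply: enum_valP.
Qed.

Lemma distinct_representatives (I : eqType) (T : finType) (x0 : T) (A : I -> {set T})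
    (s : seq I) :
  (forall i, i \in s -> size s <= #|A i|) ->
  exists2 g : I -> T, (forall i, i \in s -> g i \in A i) & {in s &, injective g}.
Proof.
elim: s => [|i s IHs] /=; first by move=> _; exists (fun=> x0) => // j.
move=> large.
have [g gA g_inj] :
    exists2 g : I -> T, (forall j, j \in s -> g j \in A j) & {in s &, injective g}.
  by apply: IHs => j js; apply/ltnW/large; rewrite inE js orbT.
have [t tAi t_fresh] : exists2 t, t \in A i & t \notin map g s.
  apply/exists_inP; rewrite -negb_forall_in; apply: contraTN (large i (mem_head _ _)).
  move=> /forall_inP Ai_used; rewrite -ltnNge ltnS.
  rewrite -(size_map g); apply: (leq_trans _ (card_size (map g s))).
  by apply/subset_leq_card/subsetP => x /Ai_used.
exists (fun j => if j == i then t else g j).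
  by move=> j; rewrite inE; case: eqP => [-> | _ /= /gA].
move=> j k; rewrite !inE.
case: (eqVneq j i) => [->|_]; case: (eqVneq k i) => [->|_] //= js ks.
- by move=> t_eq; case/negP: t_fresh; rewrite t_eq map_f.
- by move=> t_eq; case/negP: t_fresh; rewrite -t_eq map_f.
- exact: g_inj.
Qed.

Lemma card_pairs_leq (T : finType) : #|[set e : {set T} | #|e| == 2]| <= #|T| ^ 2.
Proof.
rewrite -mulnn -card_prod.
apply: leq_trans (leq_imset_card (fun x : T * T => [set x.1; x.2]) predT).
apply/subset_leq_card/subsetP => e; rewrite inE => /cards2P [x [y [_ ->]]].
by apply/imsetP; exists (x, y).
Qed.

Lemma berge_containsI (VF T : finType) (EF : {set {set VF}}) (E : {set {set T}})
    (f : VF -> T) (g : {set VF} -> {set T}) :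
  injective f -> (forall e, e \in EF -> g e \in E /\ f @: e \subset g e) ->
  {in EF &, injective g} -> berge_contains EF E.
Proof.
move=> f_inj gE g_inj; apply/existsP; exists [ffun x => f x].
apply/existsP; exists [ffun e => g e]; apply/and3P; split.
- by apply/injectiveP => x y; rewrite !ffunE => /f_inj.
- apply/forall_inP => e eF; rewrite ffunE; have [-> fe_g] := gE e eF.
  by apply: subset_trans fe_g; apply/subsetP => _ /imsetP [x xe ->]; rewrite ffunE imset_f.
- apply/forall_inP => e1 e1F; apply/forall_inP => e2 e2F; rewrite !ffunE.
  by apply/implyP => /eqP /g_inj ->.
Qed.

Definition codegree (T : finType) (E : {set {set T}}) (e : {set T}) : nat :=
  #|[set h in E | e \subset h]|.

Section BergeFree.

Variables (VF T : finType) (EF : {set {set VF}}) (r : nat) (E : {set {set T}}).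
Hypotheses (EF_graph : is_graph EF) (VF_le_r : #|VF| <= r).
Hypotheses (E_uniform : is_uniform r E) (E_free : ~~ berge_contains EF E).

Lemma berge_free_light_pair h :
  h \in E -> exists e : {set T}, [&& e \subset h, #|e| == 2 & codegree E e < #|EF|].
Proof.
move=> hE; apply/existsP; apply: contraNT E_free; rewrite negb_exists => /forallP heavy.
have [f f_inj fh] : exists2 f : VF -> T, injective f & forall x, f x \in h.
  by apply: exists_injection_into; move/forall_inP: E_uniform => /(_ h hE) /eqP ->.
have large e : e \in enum EF -> size (enum EF) <= #|[set h' in E | f @: e \subset h']|.
  rewrite mem_enum -cardE leqNgt => eF; move: (heavy (f @: e)).
  have -> : f @: e \subset h by apply/subsetP => _ /imsetP [x _ ->].
  by rewrite card_imset //; move/forall_inP: EF_graph => /(_ e eF) ->.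
have [g gE g_inj] := distinct_representatives set0 large.
apply: (@berge_containsI _ _ EF E f g f_inj) => [e eF | e1 e2 e1F e2F].
  by have := gE e; rewrite mem_enum inE => /(_ eF) /andP.
by apply: g_inj; rewrite mem_enum.
Qed.

Lemma berge_free_card_edges : #|E| <= #|EF| * #|T| ^ 2.
Proof.
pose light := [set e : {set T} | (#|e| == 2) && (codegree E e < #|EF|)].
have cover : E \subset [set h | [exists e in light, (h \in E) && (e \subset h)]].
  apply/subsetP => h hE; have [e /and3P [eh e2 light_e]] := berge_free_light_pair hE.
  by rewrite inE; apply/existsP; exists e; rewrite inE /= e2 light_e hE eh.
apply: leq_trans (subset_leq_card cover) _; apply: leq_trans (card_exists_leq_sum _ _) _.
apply: (@leq_trans (\sum_(e in light) #|EF|)).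
  by apply: leq_sum => e; rewrite inE => /andP [_ /ltnW].
rewrite sum_nat_const mulnC leq_mul2l; apply/orP; right.
apply: leq_trans (card_pairs_leq T); apply/subset_leq_card/subsetP => e.
by rewrite !inE => /andP [].
Qed.

End BergeFree.

Definition edges_share_hyperedge (T : finType) (E G : {set {set T}}) : bool :=
  [exists h in E, exists e1 in G, exists e2 in G, (e1 != e2) && (e1 :|: e2 \subset h)].

Section EdgesSharingHyperedge.

Variables (VH T : finType) (r : nat) (E : {set {set T}}).
Hypothesis E_uniform : is_uniform r E.

Lemma card_maps_into_edges (X : {set VH}) :
  #|[set f : {ffun VH -> T} | [exists h in E, [forall x in X, f x \in h]]]|
    <= #|E| * (r ^ #|X| * #|T| ^ (#|VH| - #|X|)).
Proof.
apply: leq_trans (card_exists_leq_sum _ _) _; rewrite -sum_nat_const leq_sum // => h hE.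
by rewrite card_ffun_into; move/forall_inP: E_uniform => /(_ h hE) /eqP ->.
Qed.

Lemma card_maps_edge_pair_into_edges (K : nat) (e1 e2 : {set VH}) :
  #|E| <= K * #|T| ^ 2 -> #|e1| = 2 -> #|e2| = 2 -> e1 != e2 ->
  #|[set f : {ffun VH -> T} | [exists h in E, f @: (e1 :|: e2) \subset h]]|
    <= K * r ^ 3 * #|T| ^ (#|VH| - 1).
Proof.
move=> E_small e1_2 e2_2 e1_neq_e2.
have [X X_sub X_3] : exists2 X : {set VH}, X \subset e1 :|: e2 & #|X| = 3.
  apply: exists_subset_card; rewrite -e1_2; apply/proper_card/properUl.
  by apply: contra e1_neq_e2 => e2_sub; rewrite eq_sym eqEcard e2_sub e1_2 e2_2.
have VH_ge3 : 3 <= #|VH| by rewrite -X_3 max_card.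
apply: (@leq_trans (#|E| * (r ^ #|X| * #|T| ^ (#|VH| - #|X|)))).
  apply: (leq_trans _ (card_maps_into_edges X)); apply/subset_leq_card/subsetP => f.
  rewrite !inE => /exists_inP [h hE fh]; apply/exists_inP; exists h => //.
  by apply/forall_inP => x xX; apply: (subsetP fh); rewrite imset_f // (subsetP X_sub).
rewrite X_3 (_ : #|VH| - 1 = 2 + (#|VH| - 3)); last by lia.
by rewrite expnD mulnACA leq_mul2r E_small orbT.
Qed.

Lemma card_copies_sharing_hyperedge (EH : {set {set VH}}) (K : nat) :
  is_graph EH -> #|E| <= K * #|T| ^ 2 ->
  #|copy_set EH (shadow E) :&: [set c | edges_share_hyperedge E c.2]|
    <= #|EH| ^ 2 * (K * r ^ 3 * #|T| ^ (#|VH| - 1)).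
Proof.
move=> /forall_inP EH_graph E_small.
pose pairs := [set p : {set VH} * {set VH} | [&& p.1 \in EH, p.2 \in EH & p.1 != p.2]].
pose bad := [set f : {ffun VH -> T} |
  [exists p in pairs, [exists h in E, f @: (p.1 :|: p.2) \subset h]]].
have copies_bad : copy_set EH (shadow E) :&: [set c | edges_share_hyperedge E c.2]
    \subset [set (f @: VH, [set f @: e | e : {set VH} in EH]) | f : {ffun VH -> T} in bad].
  apply/subsetP => -[V G]; rewrite !inE /=.
  case/andP=> /existsP [f /and4P [_ /eqP -> /eqP -> _]] /exists_inP [h hE].
  case/exists_inP=> _ /imsetP [a1 a1H ->] /exists_inP [_ /imsetP [a2 a2H ->]].
  case/andP=> fa1_neq_fa2 fa_h; apply: imset_f; rewrite inE; apply/exists_inP; exists (a1, a2).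
    by rewrite inE /= a1H a2H; apply: contraNneq fa1_neq_fa2 => ->.
  by apply/exists_inP; exists h; rewrite ?imsetU.
apply: leq_trans (subset_leq_card copies_bad) (leq_trans (leq_imset_card _ _) _).
apply: leq_trans (card_exists_leq_sum _ _) _.
apply: (@leq_trans (\sum_(p in pairs) (K * r ^ 3 * #|T| ^ (#|VH| - 1)))).
  apply: leq_sum => -[a1 a2]; rewrite inE /= => /and3P [a1H a2H a1_neq_a2].
  by apply: card_maps_edge_pair_into_edges; rewrite ?(eqP (EH_graph _ _)).
rewrite sum_nat_const leq_mul2r -mulnn -cardsX; apply/orP; right.
by apply/subset_leq_card/subsetP => -[a1 a2]; rewrite !inE /= => /and3P [-> ->].
Qed.

End EdgesSharingHyperedge.

Section Selections.

Variables (T : finType) (E : {set {set T}}).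

Definition selections : {set {ffun {set T} -> {set T}}} :=
  [set s | s \in family (fun h => powerset h)].

Definition selected_graph (s : {ffun {set T} -> {set T}}) : {set {set T}} :=
  [set s h | h in E & #|s h| == 2].

Lemma selected_graph_is_graph s : is_graph (selected_graph s).
Proof. by apply/forall_inP => e /imsetP [h]; rewrite inE => /andP [_ sh_2] ->. Qed.

Lemma selected_graph_free (VF : finType) (EF : {set {set VF}}) s :
  s \in selections -> ~~ berge_contains EF E -> ~~ contains EF (selected_graph s).
Proof.
rewrite inE => /familyP s_sub; apply: contra.
case/existsP=> f /andP [/injectiveP f_inj /forall_inP fEF].
have /fin_all_exists [g gP] :
    forall e : {set VF}, exists h : {set T}, e \in EF -> h \in E /\ s h = f @: e.
  move=> e; case: (boolP (e \in EF)) => [/fEF /imsetP [h] | _].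
    by rewrite inE => /andP [hE _] fe; exists h.
  by exists set0.
apply: (@berge_containsI _ _ EF E f g f_inj) => [e eF | e1 e2 e1F e2F g_eq].
  by have [gE <-] := gP e eF; split; rewrite // -powersetE s_sub.
by apply: (imset_inj f_inj); rewrite -(gP e1 e1F).2 -(gP e2 e2F).2 g_eq.
Qed.

Lemma card_selections_covering (r : nat) (G : {set {set T}}) :
  is_uniform r E -> G \subset shadow E -> ~~ edges_share_hyperedge E G ->
  #|selections| <= 2 ^ (r * #|G|) * #|[set s in selections | G \subset selected_graph s]|.
Proof.
move=> /forall_inP E_uniform /subsetP G_shadow G_spread.
have /fin_all_exists [cover coverP] :
    forall e : {set T}, exists h : {set T}, e \in G -> h \in E /\ e \subset h.
  move=> e; case: (boolP (e \in G)) => [/G_shadow | _]; last by exists set0.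
  by rewrite inE => /andP [_ /exists_inP [h hE eh]]; exists h.
have cover_inj : {in G &, injective cover}.
  move=> e1 e2 e1G e2G cover_eq; apply/eqP; apply: contraNT G_spread => e1_neq_e2.
  have [hE e1h] := coverP e1 e1G; have [_ e2h] := coverP e2 e2G.
  apply/exists_inP; exists (cover e1) => //; apply/exists_inP; exists e1 => //.
  by apply/exists_inP; exists e2; rewrite // e1_neq_e2 subUset e1h cover_eq.
(* [fixed (cover e)] is the singleton of [e], by injectivity of [cover] on [G]. *)
pose fixed h := [set t in powerset h | [forall e in G, (cover e == h) ==> (t == e)]].
have fixed_selected : [set s | s \in family fixed]
    \subset [set s in selections | G \subset selected_graph s].
  apply/subsetP => s; rewrite !inE => /familyP s_fixed; apply/andP; split.
    by apply/familyP => h; have := s_fixed h; rewrite inE => /andP [].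
  apply/subsetP => e eG; have [hE _] := coverP e eG.
  have := s_fixed (cover e); rewrite inE => /andP [_ /forall_inP /(_ e eG)].
  rewrite eqxx => /eqP se.
  have := G_shadow e eG; rewrite inE => /andP [e_2 _].
  by apply/imsetP; exists (cover e); rewrite ?inE ?hE ?se.
apply: (@leq_trans ((2 ^ r) ^ #|cover @: G| * #|[set s | s \in family fixed]|)).
  apply: card_family_leq => h; last first.
    move=> h_uncovered; apply/subset_leq_card/subsetP => t th; rewrite inE th.
    apply/forall_inP => e eG; apply/implyP => /eqP cover_e.
    by case/negP: h_uncovered; rewrite -cover_e imset_f.
  case/imsetP => e eG ->; have [hE eh] := coverP e eG.
  rewrite card_powerset (eqP (E_uniform _ hE)) -{1}[2 ^ r]muln1 leq_mul2l.
  apply/orP; right; apply/card_gt0P; exists e; rewrite inE powersetE eh.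
  by apply/forall_inP => e' e'G; apply/implyP => /eqP /cover_inj ->.
rewrite -expnM leq_mul ?subset_leq_card //.
by rewrite leq_pexp2l // leq_mul2l leq_imset_card orbT.
Qed.

End Selections.

Section CopySet.

Variables (VH T : finType) (EH : {set {set VH}}) (G : {set {set T}}).

Lemma copy_set_edges c : c \in copy_set EH G -> c.2 \subset G /\ #|c.2| <= #|EH|.
Proof. by rewrite inE => /existsP [f /and4P [_ _ /eqP -> ->]]; rewrite leq_imset_card. Qed.

Lemma copy_set_retarget (G' : {set {set T}}) c :
  c \in copy_set EH G -> c.2 \subset G' -> c \in copy_set EH G'.
Proof.
rewrite !inE => /existsP [f /and4P [f_inj c1 c2 _]] c2G'.
by apply/existsP; exists f; rewrite f_inj c1 c2 c2G'.
Qed.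

End CopySet.

Lemma card_copies_spread (VF VH T : finType) (EF : {set {set VF}}) (EH : {set {set VH}})
    (r M : nat) (E : {set {set T}}) :
  is_uniform r E -> ~~ berge_contains EF E ->
  (forall G : {set {set T}}, is_graph G -> ~~ contains EF G -> copies EH G <= M) ->
  #|copy_set EH (shadow E) :\: [set c | edges_share_hyperedge E c.2]| <= 2 ^ (r * #|EH|) * M.
Proof.
move=> E_uniform E_free ex_M.
apply: (double_counting_leq (S := selections T)
  (R := fun (c : {set T} * {set {set T}}) s => c.2 \subset selected_graph E s)).
- apply/card_gt0P; exists [ffun h => h]; rewrite inE; apply/familyP => h.
  by rewrite ffunE powersetE.
- move=> c /setDP [/copy_set_edges [c_shadow c_small]]; rewrite inE => spread.
  apply: leq_trans (card_selections_covering E_uniform c_shadow spread) _.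
  by rewrite leq_mul2r leq_pexp2l ?orbT // leq_mul2l c_small orbT.
- move=> s s_sel; have s_free := selected_graph_free s_sel E_free.
  apply: leq_trans (ex_M _ (selected_graph_is_graph E s) s_free).
  apply/subset_leq_card/subsetP => c; rewrite [c \in _]inE.
  case/andP=> /setDP [c_copy _] c_s.
  exact: copy_set_retarget c_copy c_s.
Qed.

Theorem proposition7 (VF VH : finType) (EF : {set {set VF}}) (EH : {set {set VH}})
    (r : nat) :
  is_graph EF -> is_graph EH -> #|VF| <= r ->
  exists (C1 C2 N : nat), forall n : nat, N <= n ->
    ex_hat r EH EF n <= C1 * ex_gen EH EF n + C2 * n ^ (#|VH| - 1).
Proof.
move=> EF_graph EH_graph VF_le_r.
exists (2 ^ (r * #|EH|)), (#|EH| ^ 2 * (#|EF| * r ^ 3)), 0 => n _.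
apply/bigmax_leqP => E /andP [E_uniform E_free].
rewrite /copies -(cardsID [set c | edges_share_hyperedge E c.2]) addnC leq_add //.
  apply: (card_copies_spread E_uniform E_free) => G G_graph G_free.
  by apply: leq_bigmax_cond; rewrite G_graph G_free.
have E_small := berge_free_card_edges EF_graph VF_le_r E_uniform E_free.
apply: leq_trans (card_copies_sharing_hyperedge E_uniform EH_graph E_small) _.
by rewrite card_ord !mulnA.
Qed.
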